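(* Let $\kappa$ be an uncountable cardinal with $\kappa^{<\kappa}=\kappa$. If $\mathfrak{d}_\kappa<{\rm cf}(2^\kappa)$, then $\mathrm{Gal}(\mathcal{D}_\kappa,2^\kappa,2^\kappa)$ holds.
   Context: $\mathcal{D}_\kappa$ is the club filter on $\kappa$. $\mathrm{Gal}(\mathcal{F},\mu,\lambda)$: for every $\mathcal{C}\subseteq\mathcal{F}$ with $|\mathcal{C}|=\lambda$ there is $\mathcal{E}\subseteq\mathcal{C}$ with $|\mathcal{E}|=\mu$ and $\bigcap\mathcal{E}\in\mathcal{F}$. For $f,g\in{}^\kappa\kappa$, $f\leq^*g$ means $|\{\alpha<\kappa\mid f(\alpha)>g(\alpha)\}|<\kappa$; $\mathfrak{d}_\kappa$ is the least size of a family $\mathcal{D}\subseteq{}^\kappa\kappa$ such that every $f\in{}^\kappa\kappa$ satisfies $f\leq^*g$ for some $g\in\mathcal{D}$. *)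

From mathcomp Require Import all_boot.
From mathcomp Require Import boolp classical_sets cardinality.
Set Implicit Arguments. Unset Strict Implicit. Unset Printing Implicit Defensive.
Local Open Scope classical_set_scope.
Local Open Scope card_scope.

(* An ordinal is represented by a type carrying a strict well-order. *)
Definition strict_well_order (T : Type) (lt : T -> T -> Prop) : Prop :=
  [/\ (forall x, ~ lt x x),
      (forall x y z, lt x y -> lt y z -> lt x z),
      (forall x y, [\/ x = y, lt x y | lt y x]) &
      well_founded lt].

(* (T, lt) is an initial ordinal, i.e. an infinite-or-finite cardinal viewed
   as the ordinal of its elements: every proper initial segment has strictly
   smaller cardinality than the whole. *)
Definition initial_ordinal (T : Type) (lt : T -> T -> Prop) : Prop :=
  strict_well_order lt /\
  forall a : T, ~ ([set: T] #<= [set b | lt b a]).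

(* kappa^{<kappa} = kappa : the set of pairs (alpha, f) with alpha < kappa
   and f : alpha -> kappa has cardinality kappa. *)
Definition less_than_pow_eq (K : Type) (lt : K -> K -> Prop) : Prop :=
  [set: {a : K & {b : K | lt b a} -> K}] #= [set: K].

Definition unbounded (K : Type) (lt : K -> K -> Prop) (C : set K) : Prop :=
  forall a, exists b, lt a b /\ C b.

(* closed: every nonzero a below which C is unbounded (necessarily a limit)
   belongs to C *)
Definition closed (K : Type) (lt : K -> K -> Prop) (C : set K) : Prop :=
  forall a, (exists b, lt b a) ->
    (forall b, lt b a -> exists c, [/\ lt b c, lt c a & C c]) -> C a.

Definition club (K : Type) (lt : K -> K -> Prop) (C : set K) : Prop :=
  closed lt C /\ unbounded lt C.

Definition club_filter (K : Type) (lt : K -> K -> Prop) : set (set K) :=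
  [set A | exists C, club lt C /\ C `<=` A].

(* Gal(F, mu, lambda), with mu, lambda given as (cardinalities of) sets *)
Definition Gal (T : Type) (F : set (set T)) (U V : Type) (mu : set U) (lam : set V) : Prop :=
  forall Cc : set (set T), Cc `<=` F -> Cc #= lam ->
    exists E : set (set T), [/\ E `<=` Cc, E #= mu &
       F [set x | forall A, E A -> A x]].

Definition le_star (K : Type) (lt : K -> K -> Prop) (f g : K -> K) : Prop :=
  ~ ([set: K] #<= [set a | lt (g a) (f a)]).

Definition dominating (K : Type) (lt : K -> K -> Prop) (D : set (K -> K)) : Prop :=
  forall f, exists2 g, D g & le_star lt f g.

Definition cofinal (M : Type) (ltM : M -> M -> Prop) (X : set M) : Prop :=
  forall m, exists x, X x /\ (m = x \/ ltM m x).

(* d_kappa < cf(mu), where mu is presented as an initial ordinal (M, ltM):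
   some dominating family is strictly smaller than every cofinal subset of M. *)
Definition dnum_lt_cf (K : Type) (lt : K -> K -> Prop)
    (M : Type) (ltM : M -> M -> Prop) : Prop :=
  exists D : set (K -> K), dominating lt D /\
    forall X : set M, cofinal ltM X -> ~ (X #<= D).

From Pilot Require Import Defs.
From mathcomp Require Import all_boot.
From mathcomp Require Import boolp classical_sets functions cardinality.
From Stdlib Require Import Eqdep.

(* Pick for each A of the family a club C_A inside A, the function f_A sending x to
   the next point of C_A, some g_A in a fixed dominating family D with f_A <=* g_A,
   and a bound beta_A beyond which f_A <= g_A. Then every closure point of g_A above
   beta_A is a limit of points of C_A, hence lies in C_A. As kappa <= |D| < cf(2^kappa),
   two pigeonhole steps yield 2^kappa sets A sharing the same pair (g, beta), and the
   closure points of g above beta form a club inside all of them. The pigeonhole step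
   rests on Hessenberg's theorem mu * mu = mu, and the unboundedness of closure points
   on the regularity of kappa, which follows from kappa^{<kappa} = kappa by a diagonal
   argument. *)

Set Implicit Arguments.
Unset Strict Implicit.
Unset Printing Implicit Defensive.
Local Open Scope classical_set_scope.
Local Open Scope card_scope.

Lemma set_inj_card_le T U (A : set T) (B : set U) (f : T -> U) :
  set_fun A B f -> {in A &, injective f} -> A #<= B.
Proof.
move=> fAB /inj_card_eq/card_eqPle[_ Af]; apply: card_le_trans Af _.
by apply: subset_card_le => _ [x Ax <-]; exact: fAB.
Qed.

Lemma card_le_set_inj T U (A : set T) (B : set U) (u0 : U) :
  A #<= B -> exists2 f : T -> U, set_fun A B f & {in A &, injective f}.
Proof.
move/card_leP/injfunPex => [F _ Finj].
exists (fun x => if pselect (A x) is left Ax then set_val (F (SigSub (mem_set Ax))) else u0).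
  by move=> x Ax; case: pselect => // Ax'; exact: set_valP.
move=> x y /set_mem Ax /set_mem Ay; case: pselect => // {}Ax; case: pselect => // {}Ay.
by move=> /val_inj/(Finj _ _ (in_setT _) (in_setT _))/(congr1 val).
Qed.

Lemma card_le_neq0 T U (A : set T) (B : set U) : A #<= B -> A !=set0 -> B !=set0.
Proof.
move=> AB [a Aa]; apply/set0P/eqP => B0.
by move: AB; rewrite B0 => /card_le0P A0; rewrite A0 in Aa.
Qed.

Lemma card_le_setX T T' U U' (A : set T) (A' : set T') (B : set U) (B' : set U') :
  A #<= A' -> B #<= B' -> A `*` B #<= A' `*` B'.
Proof.
move=> AA' BB'; have [->|/set0P[[a b] [/= Aa Bb]]] := eqVneq (A `*` B) set0.
  exact: card_ge0.
have [a' _] := card_le_neq0 AA' (ex_intro _ a Aa).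
have [b' _] := card_le_neq0 BB' (ex_intro _ b Bb).
have [f fA finj] := card_le_set_inj a' AA'; have [g gB ginj] := card_le_set_inj b' BB'.
apply: (@set_inj_card_le _ _ _ _ (fun p => (f p.1, g p.2))) => [p [/fA ? /gB ?]//|].
move=> [x y] [x' y'] /set_mem[/= Ax By] /set_mem[/= Ax' By'] [/finj ex /ginj ey].
by rewrite (ex (mem_set Ax) (mem_set Ax')) (ey (mem_set By) (mem_set By')).
Qed.

Lemma card_setU1_le T (X : set T) (p : T) : infinite_set X -> X `|` [set p] #<= X.
Proof.
move=> Xinf; have [Xp|nXp] := pselect (X p).
  by apply: subset_card_le => x [//|->].
have [x0 _] := infinite_setN0 Xinf.
have [nu nuX nuinj] := card_le_set_inj x0 (iffLR (infiniteP X) Xinf).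
have nu_inj : injective nu := fun m n => nuinj m n (in_setT m) (in_setT n).
pose idx v := if pselect (exists n, v = nu n) is left h then Some (projT1 (cid h)) else None.
have idx_nu n : idx (nu n) = Some n.
  rewrite /idx; case: pselect => [h|[]]; last by exists n.
  by congr Some; apply: nu_inj; rewrite -(projT2 (cid h)).
have idxP v n : idx v = Some n -> v = nu n.
  by rewrite /idx; case: pselect => // h [<-]; exact: (projT2 (cid h)).
(* Hilbert's hotel along the injected copy [nu] of nat. *)
pose psi v := if pselect (v = p) is left _ then nu 0 else if idx v is Some n then nu n.+1 else v.
pose phi w := if idx w is Some n then (if n is k.+1 then nu k else p) else w.
apply: (@set_inj_card_le _ _ _ _ psi).
  move=> v Xv; rewrite /psi; case: pselect => [_|vp]; first exact: nuX.
  by case: (idx v) => [n|]; [exact: nuX|case: Xv].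
apply: (@can_in_inj _ _ _ _ phi) => v _; rewrite /psi /phi.
case: pselect => [->|_]; first by rewrite idx_nu.
by case Ev: (idx v) => [n|]; rewrite ?idx_nu ?Ev // (idxP _ _ Ev).
Qed.

Lemma card_le_of_segments T U (r : T -> T -> Prop) (A : set T) (W : set U) :
  well_founded r -> (forall x y, [\/ x = y, r x y | r y x]) ->
  (forall x, A x -> ~ (W #<= [set y | A y /\ r y x])) -> A #<= W.
Proof.
move=> wf total Wbig.
have [->|/set0P[x0 Ax0]] := eqVneq A set0; first exact: card_ge0.
have [u0 _] : W !=set0.
  apply/set0P/eqP => W0; apply: (Wbig x0 Ax0); rewrite W0; exact: card_ge0.
have /choice[pick pickP] : forall S : set U, exists u, S !=set0 -> S u.
  by move=> S; have [[u Su]|S0] := pselect (S !=set0); [exists u|exists u0].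
(* phi x is a point of W outside the image of the segment of A below x. *)
pose F x (rec : forall y, r y x -> U) :=
  pick [set u | W u /\ forall y (ryx : r y x), A y -> rec y ryx <> u].
pose phi := Fix wf (fun _ => U) F.
have phiE x : phi x = F x (fun y _ => phi y).
  rewrite /phi Fix_eq // => z f g fg; congr pick.
  by rewrite (functional_extensionality_dep (fun y => functional_extensionality_dep (fg y))).
have phiP x : A x -> W (phi x) /\ forall y, A y -> r y x -> phi y <> phi x.
  move=> Ax; rewrite phiE /F; set S := (X in pick X).
  suff /pickP[Wp pfresh] : S !=set0 by split=> // y Ay ryx; exact: pfresh.
  apply: contra_notP (Wbig x Ax) => S0; apply: card_le_trans (card_image_le phi _).
  apply: subset_card_le => u Wu; apply: contra_notP S0 => nim.
  by exists u; split=> // y ryx Ay phiu; apply: nim; exists y.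
apply: (@set_inj_card_le _ _ _ _ phi) => [x /phiP[]//|x y /set_mem Ax /set_mem Ay e].
case: (total x y) => // [rxy|ryx]; exfalso.
  by apply: (proj2 (phiP y Ay) x Ax rxy).
by apply: (proj2 (phiP x Ax) y Ay ryx).
Qed.

Section WellOrder.
Variables (T : Type) (lt : T -> T -> Prop).
Hypothesis wo : strict_well_order lt.

Lemma wo_irrefl x : ~ lt x x. Proof. by case: wo. Qed.

Lemma wo_trans x y z : lt x y -> lt y z -> lt x z.
Proof. by case: wo => _ + _ _; apply. Qed.

Lemma wo_total x y : [\/ x = y, lt x y | lt y x]. Proof. by case: wo. Qed.

Lemma wo_wf : well_founded lt. Proof. by case: wo. Qed.

Lemma wo_leNgt x y : ~ lt x y -> y = x \/ lt y x.
Proof. by case: (wo_total x y) => [->|//|]; [left|right]. Qed.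

Lemma wo_min (S : set T) : S !=set0 -> exists2 m, S m & forall y, S y -> ~ lt y m.
Proof.
move=> [x Sx]; apply: contra_notP (fun Sx' => Sx' x Sx) => nomin z.
elim/(well_founded_ind wo_wf): z => z IH Sz.
by apply: nomin; exists z => // y Sy ltyz; exact: IH y ltyz Sy.
Qed.

Lemma card_le_wo_total U V (A : set U) (W : set V) :
  A #<= [set: T] -> ~ (W #<= A) -> A #<= W.
Proof.
move=> /card_subP[C CA _] WA; rewrite -(card_le_eql CA).
apply: card_le_of_segments wo_wf wo_total _ => x _ Wx; apply: WA.
by rewrite -(card_le_eqr CA); apply: card_le_trans Wx (subset_card_le _) => y [].
Qed.

Lemma card_le_segment U (A : set U) :
  A #<= [set: T] -> ~ ([set: T] #<= A) -> exists a, A #<= [set b | lt b a].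
Proof.
move=> /card_subP[C CA _] TA.
suff [a Ca] : exists a, C #<= [set b | lt b a] by exists a; rewrite -(card_le_eql CA).
apply: contrapT => nseg; apply: TA; rewrite -(card_le_eqr CA).
apply: card_le_of_segments wo_wf wo_total _ => x _ Cx; apply: nseg; exists x.
by apply: card_le_trans Cx _; apply: subset_card_le => y [].
Qed.

End WellOrder.

Arguments wo_irrefl {T lt} wo x.

Lemma closed_segmentE T (lt : T -> T -> Prop) m :
  [set b | b = m \/ lt b m] = [set b | lt b m] `|` [set m].
Proof. by apply/seteqP; split=> b /=; case; auto. Qed.

Section Hessenberg.
Variables (T : Type) (lt : T -> T -> Prop).
Hypothesis wo : strict_well_order lt.

Definition wo_max x y := if pselect (lt x y) is left _ then y else x.

Lemma wo_max_gel x y : ~ lt (wo_max x y) x.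
Proof.
rewrite /wo_max; case: pselect => [ltxy ltyx|_]; last exact: wo_irrefl.
exact: wo_irrefl wo _ (wo_trans wo ltxy ltyx).
Qed.

Lemma wo_max_ger x y : ~ lt (wo_max x y) y.
Proof. by rewrite /wo_max; case: pselect => // _; exact: wo_irrefl. Qed.

Lemma wo_maxE x y : wo_max x y = x \/ wo_max x y = y.
Proof. by rewrite /wo_max; case: pselect; auto. Qed.

Lemma segment_sub_maxl x y : [set b | lt b x] `<=` [set b | lt b (wo_max x y)].
Proof.
move=> b /= ltbx; case: (wo_leNgt wo (@wo_max_gel x y)) => [<-//|ltx].
exact: wo_trans ltbx ltx.
Qed.

Lemma segment_sub_maxr x y : [set b | lt b y] `<=` [set b | lt b (wo_max x y)].
Proof.
move=> b /= ltby; case: (wo_leNgt wo (@wo_max_ger x y)) => [<-//|lty].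
exact: wo_trans ltby lty.
Qed.

Definition max_lex (p q : T * T) :=
  lt (wo_max p.1 p.2) (wo_max q.1 q.2) \/
  (wo_max p.1 p.2 = wo_max q.1 q.2 /\ (lt p.1 q.1 \/ (p.1 = q.1 /\ lt p.2 q.2))).

Lemma max_lex_wf : well_founded max_lex.
Proof.
have wf := wo_wf wo.
suff Acc_max m p : wo_max p.1 p.2 = m -> Acc max_lex p by move=> p; exact: Acc_max _ p erefl.
elim/(well_founded_ind wf): m p => m IHm [x y] /=.
elim/(well_founded_ind wf): x y => x IHx y; elim/(well_founded_ind wf): y => y IHy em.
constructor => -[x' y'] [/= ltm|[/= eqm [ltx|[ex lty]]]].
- by apply: IHm (x', y') erefl; rewrite -em.
- by apply: (IHx x' ltx y'); rewrite eqm.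
- by subst x'; apply: (IHy y' lty); rewrite eqm.
Qed.

Lemma max_lex_total p q : [\/ p = q, max_lex p q | max_lex q p].
Proof.
case: p q => [x y] [x' y']; rewrite /max_lex /=.
case: (wo_total wo (wo_max x y) (wo_max x' y')) => [em|?|?];
  [|by apply: Or32; left|by apply: Or33; left].
case: (wo_total wo x x') => [ex|?|?];
  [subst x'|by apply: Or32; right; split=> //; left|by apply: Or33; right; split=> //; left].
case: (wo_total wo y y') => [ey|?|?]; first by subst y'; apply: Or31.
- by apply: Or32; right; split=> //; right.
- by apply: Or33; right; split=> //; right.
Qed.

Lemma max_lex_le_max p q : max_lex p q ->
  (p.1 = wo_max q.1 q.2 \/ lt p.1 (wo_max q.1 q.2)) /\
  (p.2 = wo_max q.1 q.2 \/ lt p.2 (wo_max q.1 q.2)).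
Proof.
case: p => x y /= [ltm|[<- _]] /=; last first.
  by split; apply: (wo_leNgt wo); [exact: wo_max_gel|exact: wo_max_ger].
split; right.
- by case: (wo_leNgt wo (@wo_max_gel x y)) => [->//|ltx]; exact: wo_trans ltx ltm.
- by case: (wo_leNgt wo (@wo_max_ger x y)) => [->//|lty]; exact: wo_trans lty ltm.
Qed.

Lemma segment_setX_le e : infinite_set [set b | lt b e] ->
  [set b | lt b e] `*` [set b | lt b e] #<= [set b | lt b e].
Proof.
elim/(well_founded_ind (wo_wf wo)): e => e IH einf.
have [[e' [lte'e ee']]|nsmaller] :=
  pselect (exists e', lt e' e /\ [set b | lt b e] #<= [set b | lt b e']).
  have e'inf : infinite_set [set b | lt b e'] by move=> /(card_le_finite ee').
  apply: card_le_trans (card_le_setX ee' ee') _; apply: card_le_trans (IH e' lte'e e'inf) _.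
  by apply: subset_card_le => b /= ltb; exact: wo_trans ltb lte'e.
(* Now e is a cardinal: the max_lex-predecessors of (x, y) lie in the square of the
   closed segment below max x y, which is smaller than e by induction. *)
apply: card_le_of_segments max_lex_wf max_lex_total _ => -[x y] [/= xe ye] hle.
set m := wo_max x y.
have me : lt m e by rewrite /m; case: (wo_maxE x y) => ->.
have {}hle : [set b | lt b e] #<= [set b | b = m \/ lt b m] `*` [set b | b = m \/ lt b m].
  by apply: card_le_trans hle (subset_card_le _) => p [_ /max_lex_le_max].
have [mfin|minf] := pselect (finite_set [set b | lt b m]).
  apply: einf; apply: card_le_finite hle _.
  by apply: finite_setX; rewrite closed_segmentE finite_setU; split=> //; exact: finite_set1.
have cseg_le : [set b | b = m \/ lt b m] #<= [set b | lt b m].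
  by rewrite closed_segmentE; exact: card_setU1_le.
apply: nsmaller; exists m; split=> //; apply: card_le_trans hle _.
exact: card_le_trans (card_le_setX cseg_le cseg_le) (IH m me minf).
Qed.

End Hessenberg.

Section InitialOrdinal.
Variables (T : Type) (lt : T -> T -> Prop).
Hypotheses (io : initial_ordinal lt) (Tinf : infinite_set [set: T]).

Lemma closed_segment_small a : ~ ([set: T] #<= [set b | b = a \/ lt b a]).
Proof.
rewrite closed_segmentE; have [fin|inf] := pselect (finite_set [set b | lt b a]).
  move=> /card_le_finite fin_le; apply/Tinf/fin_le.
  by rewrite finite_setU; split=> //; exact: finite_set1.
by move=> /card_le_trans/(_ (card_setU1_le _ inf)); exact: (proj2 io a).
Qed.

Lemma initial_ordinal_gt a : exists b, lt a b.
Proof.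
apply: contrapT => nogt; apply: (@closed_segment_small a); apply: subset_card_le => b _.
by apply: (wo_leNgt (proj1 io)) => ltab; apply: nogt; exists b.
Qed.

Lemma segment_setX_small e : ~ ([set: T] #<= [set b | lt b e] `*` [set b | lt b e]).
Proof.
have [fin|inf] := pselect (finite_set [set b | lt b e]).
  by move=> /card_le_finite fin_le; apply/Tinf/fin_le; exact: finite_setX.
by move=> /card_le_trans/(_ (segment_setX_le (proj1 io) inf)); exact: (proj2 io e).
Qed.

End InitialOrdinal.

Arguments closed_segment_small {T lt} io Tinf a.
Arguments segment_setX_small {T lt} io Tinf e.

Lemma card_le_fibers T Q U (S : set T) (P : set Q) (W : set U) (pi : T -> Q) :
  set_fun S P pi -> (forall q, P q -> [set t | S t /\ pi t = q] #<= W) -> S #<= P `*` W.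
Proof.
move=> piP fibW; have [->|/set0P[t0 St0]] := eqVneq S set0; first exact: card_ge0.
have [u0 _] := card_le_neq0 (fibW _ (piP _ St0)) (ex_intro _ t0 (conj St0 erefl)).
have /choice[h hP] : forall q, exists h : T -> U, P q ->
    set_fun [set t | S t /\ pi t = q] W h /\ {in [set t | S t /\ pi t = q] &, injective h}.
  move=> q; have [Pq|nPq] := pselect (P q); last by exists (fun=> u0); move=> /nPq.
  by have [h hW hinj] := card_le_set_inj u0 (fibW q Pq); exists h.
apply: (@set_inj_card_le _ _ _ _ (fun t => (pi t, h (pi t) t))).
  by move=> t St; have [hW _] := hP _ (piP t St); split; [exact: piP|exact: hW].
move=> t t' /set_mem St /set_mem St' [e]; rewrite -e => eh.
by have [_ hinj] := hP _ (piP t St); apply: hinj eh; apply: mem_set.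
Qed.

Definition card_lt_cf M (ltM : M -> M -> Prop) U (P : set U) :=
  forall X : set M, cofinal ltM X -> ~ (X #<= P).

Section Pigeonhole.
Variables (M : Type) (ltM : M -> M -> Prop).
Hypotheses (HM : initial_ordinal ltM) (Minf : infinite_set [set: M]).

Lemma pigeonhole_cf_setT Q (P : set Q) (pi : M -> Q) :
  P #<= [set: M] -> card_lt_cf ltM P -> set_fun setT P pi ->
  exists2 q, P q & [set: M] #<= [set m | pi m = q].
Proof.
move=> PM Pcf piP; apply: contrapT => nfib.
have woM := proj1 HM; have [m0 _] := infinite_setN0 Minf.
(* Otherwise each fibre lies below some a q; as |P| < cf M these bounds lie below one
   m1, so M injects into P * seg m1, hence into the square of a segment. *)
have /choice[a aP] : forall q, exists a, P q -> [set m | pi m = q] #<= [set b | ltM b a].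
  move=> q; have [Pq|nPq] := pselect (P q); last by exists m0; move=> /nPq.
  have [|a fib_a] := card_le_segment woM (card_leT [set m | pi m = q]).
    by move=> Mfib; apply: nfib; exists q.
  by exists a.
have [m1 aqm1] : exists m1, forall q, P q -> ltM (a q) m1.
  apply: contrapT => nub; apply: (Pcf (a @` P)); last exact: card_image_le.
  move=> m; apply: contrapT => nocof; apply: nub; exists m => q Pq.
  have [eqm|//|ltm] := wo_total woM (a q) m; case: nocof; exists (a q).
  - by split; [exists q|left].
  - by split; [exists q|right].
have [d Pd] : exists d, P #<= [set b | ltM b d].
  apply: (card_le_segment woM PM); apply: Pcf => m.
  by exists m; split=> //; left.
have M_le_Pm1 : [set: M] #<= P `*` [set b | ltM b m1].
  apply: card_le_fibers piP _ => q Pq.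
  have seg_sub : [set b | ltM b (a q)] `<=` [set b | ltM b m1].
    by move=> b /= ltb; apply: (wo_trans woM ltb (aqm1 q Pq)).
  have fib_sub : [set t | [set: M] t /\ pi t = q] `<=` [set m | pi m = q] by move=> m [].
  apply: card_le_trans (subset_card_le fib_sub) _.
  exact: card_le_trans (aP q Pq) (subset_card_le seg_sub).
apply: (segment_setX_small HM Minf (wo_max ltM d m1)).
apply: card_le_trans M_le_Pm1 (card_le_setX _ _).
- exact: card_le_trans Pd (subset_card_le (@segment_sub_maxl _ _ woM d m1)).
- exact: subset_card_le (@segment_sub_maxr _ _ woM d m1).
Qed.

Lemma pigeonhole_cf T Q (S : set T) (P : set Q) (pi : T -> Q) :
  [set: M] #<= S -> P #<= [set: M] -> card_lt_cf ltM P -> set_fun S P pi ->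
  exists2 q, P q & [set: M] #<= [set t | S t /\ pi t = q].
Proof.
move=> MS PM Pcf piP; have [m0 _] := infinite_setN0 Minf.
have [t0 _] := card_le_neq0 MS (ex_intro _ m0 I).
have [c cS cinj] := card_le_set_inj t0 MS.
have [q Pq Mq] := @pigeonhole_cf_setT _ _ (pi \o c) PM Pcf (fun m _ => piP _ (cS m I)).
exists q => //; apply: card_le_trans Mq (set_inj_card_le _ _).
- by move=> m /= <-; split=> //; exact: cS.
- by move=> m m' _ _; apply: cinj; exact: in_setT.
Qed.

End Pigeonhole.

Section ClosurePoints.
Variables (T : Type) (lt : T -> T -> Prop).
Hypothesis wo : strict_well_order lt.

Definition closure_points (g : T -> T) (beta : T) :=
  [set d | lt beta d /\ forall c, lt c d -> lt (g c) d].

Lemma closure_points_closed g beta : Defs.closed lt (closure_points g beta).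
Proof.
move=> a [b0 ltb0a] Zcof; split.
  by have [c [_ ltca [ltbc _]]] := Zcof b0 ltb0a; apply: (wo_trans wo ltbc ltca).
move=> c ltca; have [z [ltcz ltza [_ gz]]] := Zcof c ltca.
exact: (wo_trans wo (gz c ltcz) ltza).
Qed.

Lemma closure_points_sub (C : set T) (f g : T -> T) beta :
  Defs.closed lt C -> (forall x, lt x (f x) /\ C (f x)) ->
  (forall x, ~ lt x beta -> ~ lt (g x) (f x)) -> closure_points g beta `<=` C.
Proof.
move=> Ccl fC gf d [ltbd gd]; apply: Ccl; first by exists beta.
have f_lt x : ~ lt x beta -> lt x d -> lt (f x) d.
  move=> nxb ltxd; case: (wo_leNgt wo (gf x nxb)) => [->|ltfg]; first exact: gd.
  exact: (wo_trans wo ltfg (gd x ltxd)).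
move=> b ltbd'; have [ltbb|nbb] := pselect (lt b beta).
  have [ltbf Cf] := fC beta; exists (f beta); split=> //.
    exact: (wo_trans wo ltbb ltbf).
  exact: f_lt beta (wo_irrefl wo beta) ltbd.
by have [ltbf Cf] := fC b; exists (f b); split=> //; apply: f_lt.
Qed.

End ClosurePoints.

Section Kappa.
Variables (K : Type) (lt : K -> K -> Prop).
Hypotheses (HK : initial_ordinal lt) (Kunc : ~ countable [set: K]).
Hypothesis Kpow : less_than_pow_eq lt.

Let wo := proj1 HK.
Let Kinf : infinite_set [set: K] := fun Kfin => Kunc (finite_set_countable Kfin).

Lemma restriction_code a (B : set K) : B #<= [set b | lt b a] ->
  exists F : (K -> K) -> K, forall h h', F h = F h' -> forall b, B b -> h b = h' b.
Proof.
move=> Ba; have [io ioB ioinj] := card_le_set_inj a Ba.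
have /choice[rho rhoK] : forall c, exists b, forall b', B b' -> io b' = c -> b = b'.
  move=> c; have [[b' Bb' <-]|noB] := pselect (exists2 b', B b' & io b' = c).
    by exists b' => b Bb /ioinj-> //; apply: mem_set.
  by exists a => b' Bb' e; case: noB; exists b'.
have /card_eqPle[powK _] := Kpow; have [sg _ sginj] := card_le_set_inj a powK.
(* [h] restricted to [B] is transported to the segment below [a] along [io]. *)
pose code h : {a : K & {b : K | lt b a} -> K} :=
  existT _ a (fun c : {b : K | lt b a} => h (rho (proj1_sig c))).
exists (fun h => sg (code h)) => h h' /(sginj _ _ (in_setT _) (in_setT _)) ecode b Bb.
have e := inj_pair2 _ _ _ _ _ ecode.
rewrite -(rhoK (io b) b Bb erefl).
exact: (congr1 (fun f => f (exist _ (io b) (ioB b Bb))) e).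
Qed.

Lemma unbounded_card_ge (B : set K) : unbounded lt B -> [set: K] #<= B.
Proof.
move=> Bunb; apply: contrapT => KB.
have [a Ba] := card_le_segment wo (card_leT B) KB.
have [F Fcode] := restriction_code Ba.
have /choice[dec decP] : forall c, exists y, (exists y', F y' = c) -> F y = c.
  by move=> c; have [[y <-]|noF] := pselect (exists y, F y = c); [exists y|exists id => /noF].
(* Diagonalize: h b avoids the values at b of the fewer than kappa functions coded below b. *)
pose V b := [set y b | y in [set y | lt (F y) b]].
have /choice[h hV] : forall b, exists z, B b -> ~ V b z.
  move=> b; have [Bb|nBb] := pselect (B b); last by exists b; move=> /nBb.
  apply: contrapT => Vfull; apply: (proj2 HK b).
  apply: card_le_trans (card_image_le (fun c => dec c b) [set c | lt c b]).
  apply: subset_card_le => z _.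
  have [y ltyb <-] : V b z by apply: contrapT => nVz; apply: Vfull; exists z.
  exists (F y) => //; apply: Fcode Bb; exact: decP (ex_intro _ y erefl).
have [b [ltb Bb]] := Bunb (F h).
by apply: (hV b Bb); exists h.
Qed.

Lemma small_bounded (B : set K) : ~ ([set: K] #<= B) -> exists a, forall b, B b -> lt b a.
Proof.
move=> KB; apply: contrapT => nobound; apply: KB; apply: unbounded_card_ge => a.
have [a' ltaa'] := initial_ordinal_gt HK Kinf a.
apply: contrapT => noB; apply: nobound; exists a' => b Bb.
have [->//|ltba] := wo_leNgt wo (fun ltab => noB (ex_intro _ b (conj ltab Bb))).
exact: (wo_trans wo ltba ltaa').
Qed.

Lemma finite_bounded (B : set K) : finite_set B -> exists a, forall b, B b -> lt b a.
Proof. by move=> Bfin; apply: small_bounded => /card_le_finite/(_ Bfin). Qed.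

Lemma closure_points_unbounded g beta : unbounded lt (closure_points lt g beta).
Proof.
move=> a.
have /choice[nx nxP] : forall x, exists v,
    [/\ lt x v, lt beta v & forall c, c = x \/ lt c x -> lt (g c) v].
  move=> x; have [w gw] : exists w, forall z, (g @` [set c | c = x \/ lt c x]) z -> lt z w.
    apply: small_bounded => /card_le_trans/(_ (card_image_le _ _)).
    exact: closed_segment_small HK Kinf x.
  have [v vP] := finite_bounded (finite_set3 w x beta).
  have vP' z : (z = w \/ z = x) \/ z = beta -> lt z v := vP z.
  exists v; split; [by apply: vP'; auto|by apply: vP'; auto|].
  move=> c xc; apply: (wo_trans wo (gw (g c) (ex_intro2 _ _ c xc erefl))).
  by apply: vP'; left; left.
(* The supremum of the iterates of nx from a is a closure point; it exists since the
   countable range of the iteration is bounded in the uncountable regular kappa. *)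
pose sq := fix sq n := if n is n'.+1 then nx (sq n') else a.
have [w sqw] : exists w, forall z, range sq z -> lt z w.
  by apply: small_bounded => /card_le_trans/(_ (card_image_le sq setT)).
have [d sqd dmin] : exists2 d, (forall n, lt (sq n) d) &
    forall v, (forall n, lt (sq n) v) -> ~ lt v d.
  by apply: (wo_min wo); exists w => n; apply: sqw; exists n.
exists d; split; first exact: sqd 0.
split; first by have [_ ltb _] := nxP a; apply: (wo_trans wo ltb (sqd 1)).
move=> c ltcd; have [n ncn] : exists n, ~ lt (sq n) c.
  apply: contrapT => nn; apply: (dmin c) ltcd => n.
  by apply: contrapT => ncn; apply: nn; exists n.
have [_ _ gnx] := nxP (sq n).
exact: (wo_trans wo (gnx c (wo_leNgt wo ncn)) (sqd n.+1)).
Qed.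

Lemma club_filter_closure_points (D : set (K -> K)) (A : set K) :
  dominating lt D -> club_filter lt A ->
  exists g, D g /\ exists beta, closure_points lt g beta `<=` A.
Proof.
move=> Ddom [C [[Ccl /choice[f fC]] CA]].
have [g Dg fg] := Ddom f; have [beta betaP] := small_bounded fg.
exists g; split=> //; exists beta; apply: subset_trans CA.
by apply: (closure_points_sub wo Ccl fC) => x nxb /betaP.
Qed.

Lemma card_fun_le_powerset : [set: K -> K] #<= [set: set K].
Proof.
have [k0 _] := infinite_setN0 Kinf.
have /card_eqPle[powK _] := Kpow; have [sg _ sginj] := card_le_set_inj k0 powK.
pose code h a : {a : K & {b : K | lt b a} -> K} :=
  existT _ a (fun c : {b : K | lt b a} => h (proj1_sig c)).
apply: (@set_inj_card_le _ _ _ _ (fun h => range (fun a => sg (code h a)))) => // h h' _ _ e.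
apply: funext => x; have [a ltxa] := initial_ordinal_gt HK Kinf x.
have : range (fun a => sg (code h' a)) (sg (code h a)) by rewrite -e; exists a.
move=> [b _ /(sginj _ _ (in_setT _) (in_setT _)) ecode].
have /= eba := congr1 (@projT1 _ _) ecode; subst b.
have e' := inj_pair2 _ _ _ _ _ ecode.
exact: (congr1 (fun f => f (exist _ x ltxa)) (esym e')).
Qed.

Lemma dominating_card_ge M (ltM : M -> M -> Prop) (D : set (K -> K)) :
  strict_well_order ltM -> D #<= [set: M] -> dominating lt D -> [set: K] #<= D.
Proof.
move=> woM DM Ddom; apply: contrapT => KD.
have [k0 _] := infinite_setN0 Kinf.
have [io _ ioinj] := card_le_set_inj k0 (card_le_wo_total woM DM KD).
(* f a bounds g a for the fewer than kappa functions g in D with io g < a, so f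
   eventually exceeds every member of D. *)
have /choice[f fP] : forall a, exists v, forall g, D g -> lt (io g) a -> lt (g a) v.
  move=> a; have [|v vP] := small_bounded (B := [set g a | g in [set g | D g /\ lt (io g) a]]).
    move=> /card_le_trans/(_ (card_image_le _ _)) KDa; apply: (proj2 HK a).
    apply: card_le_trans KDa (set_inj_card_le (f := io) _ _) => [g [] //|].
    by move=> g g' /set_mem[Dg _] /set_mem[Dg' _] /ioinj; apply; apply: mem_set.
  by exists v => g Dg ltga; apply: vP; exists g.
have [g Dg fg] := Ddom f; apply: fg.
apply: card_le_trans (unbounded_card_ge (B := [set a | lt (io g) a]) _) (subset_card_le _).
- move=> a; have [v vP] := finite_bounded (finite_set2 a (io g)).
  by exists v; split; apply: vP; [left|right].
- by move=> a ltga; exact: fP a g Dg ltga.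
Qed.

End Kappa.

Unset Implicit Arguments.

Theorem corollary5p6 (K : Type) (lt : K -> K -> Prop)
  (M : Type) (ltM : M -> M -> Prop) :
  initial_ordinal lt ->
  ~ countable [set: K] ->
  less_than_pow_eq lt ->
  initial_ordinal ltM ->
  [set: M] #= [set: set K] ->
  dnum_lt_cf lt ltM ->
  Gal (club_filter lt) [set: set K] [set: set K].
Proof.
move=> HK Kunc Kpow HM /card_eqPle[MsK sKM] [D [Ddom Dcf]] Cc CcF /card_eqPle[CcsK sKCc].
have Kinf : infinite_set [set: K] by move=> /finite_set_countable.
have [k0 _] := infinite_setN0 Kinf.
have K_le_setK : [set: K] #<= [set: set K].
  by apply: (set_inj_card_le (f := set1)) => // x y _ _ exy; have : [set y] x by rewrite -exy.
have K_le_M := card_le_trans K_le_setK sKM.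
have Minf : infinite_set [set: M] by move=> /(card_le_finite K_le_M).
have D_le_M : D #<= [set: M].
  exact: card_le_trans (card_leT D) (card_le_trans (card_fun_le_powerset HK Kunc Kpow) sKM).
have Kcf : card_lt_cf ltM [set: K].
  move=> X Xcof XK; apply: (Dcf X Xcof); apply: card_le_trans XK _.
  exact: (dominating_card_ge HK Kunc Kpow (proj1 HM) D_le_M Ddom).
have /choice[gb gbP] : forall A, exists gb : (K -> K) * K,
    Cc A -> D gb.1 /\ closure_points lt gb.1 gb.2 `<=` A.
  move=> A; have [/CcF|nA] := pselect (Cc A); last by exists (id, k0) => /nA.
  by case/(club_filter_closure_points HK Kunc Kpow Ddom) => g [Dg [beta gA]]; exists (g, beta).
have [g Dg Mg] := pigeonhole_cf HM Minf (card_le_trans MsK sKCc) D_le_M Dcf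
  (fun A CcA => proj1 (gbP A CcA)).
have [beta _ Mgb] := pigeonhole_cf HM Minf Mg K_le_M Kcf (pi := fun A => (gb A).2)
  (fun _ _ => I).
exists [set A | (Cc A /\ (gb A).1 = g) /\ (gb A).2 = beta]; split.
- by move=> A [[]].
- apply/card_eqPle; split; last exact: card_le_trans sKM Mgb.
  by apply: card_le_trans (subset_card_le _) CcsK => A [[]].
- exists (closure_points lt g beta); split.
    split; first exact: (closure_points_closed (proj1 HK)).
    exact: (closure_points_unbounded HK Kunc Kpow).
  by move=> x Zx A [[CcA eg] eb]; apply: (proj2 (gbP A CcA)); rewrite eg eb.
Qed.
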